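(* Let $\alpha\in(0,\tfrac12)$, $K>0$ and $\mu\in\widetilde{\mathcal C}_{\mathcal M}(0,T)$, and let $X(t;0,z,\Omega)$ be the (forward-unique) flow of $\frac{dX}{dt}=\mathcal V[\mu_t](X)$. Then there exists $L=L(\alpha,K,\mu)$ such that $$d\big(X(t;0,(z_1,\Omega_1)),X(t;0,(z_2,\Omega_2))\big)\le d((z_1,\Omega_1),(z_2,\Omega_2))\,e^{Lt}$$ for all $(z_1,\Omega_1),(z_2,\Omega_2)\in\mathbb T\times\mathbb R$ and $t\in[0,T]$.
   Context: $\mathbb T$ is the unit circle identified with $(-\pi,\pi]$ via $z=e^{i\theta}$; $|\theta|_o$ = absolute value of the representative of $\theta$ mod $2\pi$ in $(-\pi,\pi]$; $d((e^{i\theta_1},\Omega_1),(e^{i\theta_2},\Omega_2))=(|\theta_1-\theta_2|_o^2+(\Omega_1-\Omega_2)^2)^{1/2}$. Kernel $h(\theta)=\sin\theta/|\theta|_o^{2\alpha}$ ($\theta\notin2\pi\mathbb Z$), $h=0$ on $2\pi\mathbb Z$. $\mathcal P[\mu](\theta,\Omega)=\Omega-K\int h(\theta-\theta')\,d\mu(\theta',\Omega')$, $\mathcal V[\mu](z,\Omega)=(\mathcal P[\mu](z,\Omega)\,iz,0)$. $\widetilde{\mathcal C}_{\mathcal M}(0,T)$: $\mu\in L^\infty(0,T;\mathcal M(\mathbb T\times\mathbb R))$ with $t\mapsto\int\varphi\,d\mu_t$ continuous for all bounded continuous $\varphi$. For such $\mu$, the characteristic system $\frac{dX}{dt}=\mathcal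 V[\mu_t](X)$, $X(0)=x$, has a global $C^1$ solution that is unique forward in time; $X(t;0,x)$ denotes it. *)

From HB Require Import structures.
From mathcomp Require Import all_boot all_order all_algebra.
From mathcomp Require Import all_classical all_reals all_analysis.
Set Implicit Arguments. Unset Strict Implicit. Unset Printing Implicit Defensive.
Import Order.TTheory GRing.Theory Num.Theory.
Import numFieldNormedType.Exports.
Local Open Scope classical_set_scope.
Local Open Scope ring_scope.

Section Kuramoto.
Variable R : realType.

(* representative of x mod 2pi in (-pi, pi] *)
Definition repO (x : R) : R :=
  x - 2 * pi * (Num.ceil ((x - pi) / (2 * pi)))%:~R.

Definition absO (x : R) : R := `|repO x|.

(* kernel h(theta) = sin theta / |theta|_o^(2 alpha), and 0 on 2 pi Z
   (note: absO x = 0 iff x \in 2 pi Z) *)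
Definition hker (alpha : R) (x : R) : R :=
  if absO x == 0 then 0 else sin x / powR (absO x) (2 * alpha).

(* distance on T x R, points represented by (lift angle, Omega) *)
Definition distTR (p q : R * R) : R :=
  Num.sqrt (absO (p.1 - q.1) ^+ 2 + (p.2 - q.2) ^+ 2).

(* measures on T x R are represented as measures on R x R (first
   coordinate = angle) concentrated on (-pi, pi] x R *)
Definition Pfield (alpha K : R) (m : {measure set (R * R)%type -> \bar R})
  (th om : R) : R :=
  om - K * fine (\int[m]_p (hker alpha (th - p.1))%:E).

Definition in_CM (T : R) (mu : R -> {measure set (R * R)%type -> \bar R}) : Prop :=
  (* concentrated on (-pi,pi] x R, i.e. a measure on T x R *)
  (forall t, t \in `[0, T] -> mu t (~` (`]- pi, pi] `*` setT)) = 0%E) /\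
  (* L^infty(0,T; M): uniformly bounded total mass *)
  (exists C : R, forall t, t \in `[0, T] -> (mu t setT <= C%:E)%E) /\
  (* weak continuity against bounded continuous functions on T x R
     (= continuous bounded functions on R x R, 2pi-periodic in the angle) *)
  (forall phi : R * R -> R,
     continuous phi ->
     (exists M : R, forall p, `|phi p| <= M) ->
     (forall p, phi (p.1 + 2 * pi, p.2) = phi p) ->
     {within `[0, T], continuous (fun t => fine (\int[mu t]_p (phi p)%:E))}).

(* (th, om) is a solution on [0,T] of dX/dt = V[mu_t](X), written with a
   continuous lift th of the angle: z(t) = e^{i th(t)}, Omega(t) = om t *)
Definition char_sol (alpha K T : R) (mu : R -> {measure set (R * R)%type -> \bar R})
  (th om : R -> R) : Prop :=
  {within `[0, T], continuous th} /\ {within `[0, T], continuous om} /\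
  (forall t, t \in `]0, T[ ->
     is_derive t 1 th (Pfield alpha K (mu t) (th t) (om t)) /\
     is_derive t 1 om 0).

End Kuramoto.

From HB Require Import structures.
From mathcomp Require Import all_boot all_order all_algebra.
From mathcomp Require Import all_classical all_reals all_analysis.
From mathcomp Require Import measurable_realfun ring lra.
Import Order.TTheory GRing.Theory Num.Theory.
Import numFieldNormedType.Exports.
Local Open Scope classical_set_scope.
Local Open Scope ring_scope.

(* The kernel h is not Lipschitz (near 0 it behaves like sign(x) |x|^(1 - 2 alpha)),
   but it is one-sided Lipschitz: (x - y) (h x - h y) >= -8 (x - y)^2.  Indeed on
   [-pi, pi] it is odd, nonnegative on [0, pi] with derivative >= -8 on (0, pi], and it
   is 2 pi-periodic.  Integrating against mu_t, whose mass is at most C, the angular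
   velocity inherits this bound.  For two characteristics pick c in 2 pi Z such that
   theta1(0) - theta2(0) - c lies in (-pi, pi]; then
   V = (theta1 - theta2 - c)^2 + (Omega1 - Omega2)^2 satisfies V' <= (1 + 16 K C) V, so
   V(t) <= V(0) e^((1 + 16 K C) t) by Gronwall, and |theta1(t) - theta2(t)|_o is at most
   |theta1(t) - theta2(t) - c|. *)

Section Trigonometry.
Context {R : realType}.
Implicit Types x : R.

Lemma sin_le_id x : 0 <= x -> sin x <= x.
Proof.
move=> x0.
have dF y : y \in `]0, x[ -> is_derive y 1 (fun y => y - sin y) (1 - cos y).
  by move=> _; apply: is_deriveB.
have cF : {within `[0, x], continuous (fun y : R => y - sin y)}.
  apply: continuous_subspaceT => y.
  by apply: continuousB; [exact: cvg_id | exact: continuous_sin].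
have [c _] := MVT_segment x0 dF cF; rewrite sin0 !subr0 => F_mvt.
by rewrite -subr_ge0 F_mvt mulr_ge0 // subr_ge0 cos_le1.
Qed.

Lemma normr_sin_le x : `|sin x| <= `|x|.
Proof.
wlog x0 : x / 0 <= x.
  move=> H; have [/H//|x0] := leP 0 x.
  by rewrite -normrN -sinN -(normrN x) H // oppr_ge0 ltW.
rewrite (ger0_norm x0) ler_norml sin_le_id // andbT.
have [x1|x1] := leP 1 x; first by rewrite (le_trans _ (sin_geN1 x)) // lerN2.
have : 0 <= sin x by rewrite sin_ge0_pi // x0 /=; have := @pi_ge2 R; lra.
lra.
Qed.

Lemma cos_ge1B_sqr_half x : 1 - x ^+ 2 / 2 <= cos x.
Proof.
have -> : x = (x / 2) *+ 2 by rewrite -mulr_natr mulfVK.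
rewrite cos_mulr2n cos2sin2.
have := normr_sin_le (x / 2).
rewrite -(ler_sqr (normr_ge0 _) (normr_ge0 _)) !real_normK ?num_real //.
rewrite -mulr_natr; lra.
Qed.

End Trigonometry.

Section Periodic.
Context {R : realType}.
Variables (f : R -> R) (p : R).
Hypothesis f_periodic : periodic f p.

Lemma periodicz (k : int) x : f (x + p *~ k) = f x.
Proof.
case: k => n; first exact: periodicn.
by rewrite NegzE mulrNz -[in RHS](subrK (p *+ n.+1) x) periodicn.
Qed.

End Periodic.

Section Representative.
Context {R : realType}.
Implicit Types x : R.

Lemma twopi_gt0 : 0 < 2 * pi :> R.
Proof. by rewrite mulr_gt0 // pi_gt0. Qed.

Lemma repO_itv x : - pi < repO x <= pi.
Proof.
have := ceil_itv ((x - pi) / (2 * pi)); rewrite /repO.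
set c := Num.ceil _; rewrite ltr_pdivlMr ?ler_pdivrMr ?twopi_gt0 // rmorphB /=.
have := @twopi_gt0; nra.
Qed.

Lemma repO_id x : - pi < x <= pi -> repO x = x.
Proof.
move=> /andP[x1 x2]; rewrite /repO (@ceil_def _ _ 0) ?mulr0 ?subr0 //.
rewrite sub0r ltr_pdivlMr ?ler_pdivrMr ?twopi_gt0 //; apply/andP; split; lra.
Qed.

Lemma repO_decomp x : exists k : int, x = repO x + (2 * pi) *~ k.
Proof. by exists (Num.ceil ((x - pi) / (2 * pi))); rewrite -mulrzr subrK. Qed.

Lemma repO_shiftz x (k : int) : repO (x + (2 * pi) *~ k) = repO x.
Proof.
have p0 : 2 * pi != 0 :> R by rewrite gt_eqF ?twopi_gt0.
rewrite /repO -mulrzr.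
have -> : (x + 2 * pi * k%:~R - pi) / (2 * pi) = (x - pi) / (2 * pi) + k%:~R.
  by rewrite addrAC mulrDl [2 * pi * _]mulrC mulfK.
by rewrite ceilDrz ?intr_int // intrKceil rmorphD /=; ring.
Qed.

Lemma repO_periodic : periodic (@repO R) (2 * pi).
Proof. by move=> x; rewrite -(repO_shiftz x 1). Qed.

Lemma normr_repO_le x : `|repO x| <= `|x|.
Proof.
have [x_in|] := boolP (- pi < x <= pi); first by rewrite repO_id.
rewrite negb_and -leNgt -ltNge => x_out; apply: (@le_trans _ _ pi).
  by have /andP[r1 r2] := repO_itv x; rewrite ler_norml r2 andbT ltW.
have pi0 := @pi_gt0 R; case/orP: x_out => x_out.
  by rewrite ler0_norm; lra.
by rewrite ger0_norm; lra.
Qed.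

Lemma absO_le x (k : int) : absO x <= `|x - (2 * pi) *~ k|.
Proof. by rewrite /absO -{1}(subrK ((2 * pi) *~ k) x) repO_shiftz normr_repO_le. Qed.

Lemma distTR_le_lift (p q : R * R) (k : int) :
  distTR p q <= Num.sqrt ((p.1 - q.1 - (2 * pi) *~ k) ^+ 2 + (p.2 - q.2) ^+ 2).
Proof.
rewrite ler_wsqrtr // lerD2r -[leRHS]real_normK ?num_real //.
rewrite ler_sqr ?nnegrE ?normr_ge0 //; exact: (absO_le (p.1 - q.1) k).
Qed.

Lemma distTR_lift (p q : R * R) : exists k : int,
  distTR p q = Num.sqrt ((p.1 - q.1 - (2 * pi) *~ k) ^+ 2 + (p.2 - q.2) ^+ 2).
Proof.
have [k e] := repO_decomp (p.1 - q.1); exists k.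
by rewrite /distTR /absO real_normK ?num_real // {2}e addrK.
Qed.

Lemma measurable_repO : measurable_fun setT (@repO R).
Proof.
rewrite /repO; apply: measurable_funB => //; apply: measurable_funM => //.
apply: nondecreasing_measurable => // x y xy.
by rewrite ler_int le_ceil // ler_pM2r ?invr_gt0 ?twopi_gt0 // lerB.
Qed.

End Representative.

Section OneSidedLipschitz.
Context {R : realType}.
Variables (g : R -> R) (M : R).

Lemma odd_one_sided_lip (a : R) : 0 <= M -> (forall x, g (- x) = - g x) ->
  (forall x, 0 <= x <= a -> 0 <= g x) ->
  (forall y z, 0 <= y -> y <= z -> z <= a -> - M * (z - y) <= g z - g y) ->
  forall y z, - a <= y -> y <= z -> z <= a -> - M * (z - y) <= g z - g y.
Proof.
move=> M0 g_odd g_ge0 g_lip y z ay yz za.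
have [y0|y0] := leP 0 y; first exact: g_lip.
have [z0|z0] := leP z 0.
  have := g_lip (- z) (- y); rewrite !g_odd oppr_ge0 lerN2 lerNl => /(_ z0 yz ay).
  by rewrite !opprK ![- _ + _]addrC.
have := g_ge0 z; rewrite (ltW z0) za => /(_ isT) gz.
have := g_ge0 (- y); rewrite g_odd oppr_ge0 (ltW y0) lerNl ay => /(_ isT) gy.
have : 0 <= M * (z - y) by rewrite mulr_ge0 // subr_ge0.
lra.
Qed.

(* After reducing x to (-pi, pi], an increment leaving that interval is split at pi,
   where g pi = g (- pi). *)
Lemma periodic_one_sided_lip : periodic g (2 * pi) ->
  (forall y z, - pi <= y -> y <= z -> z <= pi -> - M * (z - y) <= g z - g y) ->
  forall x r, 0 <= r <= 2 * pi -> - M * r <= g (x + r) - g x.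
Proof.
move=> g_per g_lip x r /andP[r0 r2pi].
have [k ->] := repO_decomp x.
rewrite addrAC !periodicz //; have := repO_itv x; set y := repO x => /andP[y1 y2].
have [yr|yr] := leP (y + r) pi.
  by have := g_lip y (y + r); rewrite [y + r - y]addrC addKr; apply; lra.
have gyr : g (y + r) = g (y + r - 2 * pi) by rewrite -{1}(subrK (2 * pi) (y + r)) g_per.
have gpi : g pi = g (- pi) by rewrite -[in RHS]g_per; congr g; ring.
have h1 : - M * (y + r - 2 * pi - - pi) <= g (y + r - 2 * pi) - g (- pi).
  by apply: g_lip; lra.
have h2 : - M * (pi - y) <= g pi - g y by apply: g_lip; lra.
rewrite gyr; rewrite gpi in h2; lra.
Qed.

End OneSidedLipschitz.

Section SingularSine.
Context {R : realType}.
Variable alpha : R.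
Hypotheses (alpha_gt0 : 0 < alpha) (alpha_lt_half : alpha < 1 / 2).
Implicit Types x y z : R.

Definition hsing y : R := sin y * `|y| `^ (- (2 * alpha)).

Lemma hsingN y : hsing (- y) = - hsing y.
Proof. by rewrite /hsing sinN normrN mulNr. Qed.

Lemma hsing_ge0 y : 0 <= y <= pi -> 0 <= hsing y.
Proof. by move=> y_itv; rewrite mulr_ge0 ?powR_ge0 ?sin_ge0_pi. Qed.

Lemma normr_hsing_le1 y : `|hsing y| <= 1.
Proof.
rewrite /hsing normrM (ger0_norm (powR_ge0 _ _)).
have [y1|y1] := leP 1 `|y|.
  rewrite -[leRHS]mulr1; apply: ler_pM; rewrite ?powR_ge0 ?sin_max //.
  by rewrite -[leRHS](powRr0 `|y|); apply: ler_powR => //; have := alpha_gt0; lra.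
have [->|y0] := eqVneq y 0; first by rewrite sin0 normr0 mul0r.
have y_gt0 : 0 < `|y| by rewrite normr_gt0.
apply: le_trans (ler_wpM2r (powR_ge0 _ _) (normr_sin_le y)) _.
rewrite -[X in X * _](powRr1 (ltW y_gt0)) -powRD; last by rewrite normr_eq0 y0 implybT.
rewrite -[leRHS](powRr0 `|y|); apply: ger_powR; first by rewrite y_gt0 ltW.
by have := alpha_lt_half; lra.
Qed.

Let p := - (2 * alpha).

Lemma sin_powR_derive x : 0 < x ->
  is_derive x 1 (fun x => sin x * x `^ p) (sin x * (p * x `^ (p - 1)) + x `^ p * cos x).
Proof.
move=> x0; apply: is_derive_eq; first by apply: is_deriveM; exact: is_derive1_powR.
by rewrite /GRing.scale /= mulrC.
Qed.

(* The singular terms add up to (1 + p) x^p >= 0, leaving -x^(p + 2) / 2 >= -8. *)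
Lemma sin_powR_derive_ge x : 0 < x <= pi ->
  - 8 <= sin x * (p * x `^ (p - 1)) + x `^ p * cos x.
Proof.
case/andP=> x0 xpi.
have sin0x : 0 <= sin x by rewrite sin_ge0_pi // ltW.
have P0 : 0 < x `^ p by rewrite powR_gt0.
have p_lt0 : p < 0 by rewrite /p oppr_lt0 mulr_gt0.
have first_term : p * x `^ p <= sin x * (p * x `^ (p - 1)).
  rewrite powRB; last by rewrite (gt_eqF x0) implybT.
  rewrite powRr1 ?(ltW x0) // mulrCA ler_nM2l //.
  by rewrite mulrA ler_pdivrMr // [_ * x]mulrC ler_pM2r // sin_le_id // ltW.
have second_term : x `^ p * (1 - x ^+ 2 / 2) <= x `^ p * cos x.
  by rewrite ler_pM2l // cos_ge1B_sqr_half.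
have small : x `^ p * x ^+ 2 <= 16.
  rewrite -powR_mulrn ?(ltW x0) // -powRD; last by rewrite (gt_eqF x0) implybT.
  have [x1|x1] := leP 1 x.
    apply: (@le_trans _ _ (x `^ 2%:R)).
      by apply: ler_powR => //; rewrite /p; have := alpha_gt0; lra.
    by rewrite powR_mulrn ?(ltW x0) // expr2; have := @pihalf_lt2 R; nra.
  apply: (@le_trans _ _ (x `^ 0)); last by rewrite powRr0 ler1n.
  by apply: ger_powR; [rewrite x0 ltW | rewrite /p; have := alpha_lt_half; lra].
rewrite /p in first_term second_term small P0 *.
have := alpha_gt0; have := alpha_lt_half; nra.
Qed.

Lemma hsing_one_sided_lip_nonneg y z : 0 <= y -> y <= z -> z <= pi ->
  - 8 * (z - y) <= hsing z - hsing y.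
Proof.
rewrite le_eqVlt => /predU1P[<- z0 zpi|y0 yz zpi].
  rewrite {2}/hsing sin0 mul0r !subr0.
  have : 0 <= hsing z by apply: hsing_ge0; rewrite z0 zpi.
  lra.
pose G x := sin x * x `^ p.
pose dG x := sin x * (p * x `^ (p - 1)) + x `^ p * cos x.
have G_deriv x : y <= x -> is_derive x 1 G (dG x).
  by move=> yx; apply: sin_powR_derive; exact: lt_le_trans yx.
have [c] : exists2 c, c \in `[y, z] & G z - G y = dG c * (z - y).
  apply: MVT_segment => // [x|].
    by rewrite in_itv /= => /andP[/ltW yx _]; exact: G_deriv.
  apply: derivable_within_continuous => x.
  by rewrite in_itv /= => /andP[yx _]; case: (G_deriv x yx).
rewrite in_itv /= => /andP[yc cz] G_mvt.
have z0 := lt_le_trans y0 yz.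
rewrite /hsing (ger0_norm (ltW y0)) (ger0_norm (ltW z0)) -/(G z) -/(G y) G_mvt.
apply: ler_wpM2r; first by rewrite subr_ge0.
apply: sin_powR_derive_ge.
by rewrite (lt_le_trans y0 yc) (le_trans cz zpi).
Qed.

Lemma hsing_one_sided_lip y z : - pi <= y -> y <= z -> z <= pi ->
  - 8 * (z - y) <= hsing z - hsing y.
Proof.
apply: odd_one_sided_lip => //; [exact: hsingN | exact: hsing_ge0 |].
exact: hsing_one_sided_lip_nonneg.
Qed.

End SingularSine.

Section Kernel.
Context {R : realType}.
Variable alpha : R.
Hypotheses (alpha_gt0 : 0 < alpha) (alpha_lt_half : alpha < 1 / 2).
Implicit Types x y : R.

Lemma hker_periodic : periodic (hker alpha) (2 * pi).
Proof.
move=> x; rewrite /hker /absO repO_periodic.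
by have -> : sin (x + 2 * pi) = sin x by rewrite mulr_natl sinD2pi.
Qed.

Lemma hker_subz x (k : int) : hker alpha (x - (2 * pi) *~ k) = hker alpha x.
Proof. by rewrite -mulrNz periodicz //; exact: hker_periodic. Qed.

Lemma hker_hsing y : - pi <= y <= pi -> hker alpha y = hsing alpha y.
Proof.
case/andP=> y1 y2; rewrite /hker /hsing powRN.
have [->|y_ne] := eqVneq y (- pi); first by rewrite sinN sinpi oppr0 !mul0r if_same.
rewrite /absO repO_id; last by rewrite y2 andbT lt_neqAle eq_sym y_ne.
by case: eqP => // /normr0_eq0 ->; rewrite sin0 mul0r.
Qed.

Lemma hker_repO x : hker alpha x = hsing alpha (repO x).
Proof.
have /andP[r1 r2] := repO_itv x.
have [k {1}->] := repO_decomp x.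
rewrite periodicz; last exact: hker_periodic.
by apply: hker_hsing; rewrite r2 andbT ltW.
Qed.

Lemma normr_hker_le1 x : `|hker alpha x| <= 1.
Proof. by rewrite hker_repO normr_hsing_le1. Qed.

Lemma measurable_hker : measurable_fun setT (hker alpha).
Proof.
rewrite (funext hker_repO); apply: measurableT_comp; last exact: measurable_repO.
apply: measurable_funM; first exact: continuous_measurable_fun (@continuous_sin R).
exact: measurableT_comp (measurable_powR _) (@normr_measurable R setT).
Qed.

Lemma hker_incr_ge x r : 0 <= r -> - 8 * r <= hker alpha (x + r) - hker alpha x.
Proof.
move=> r0; have [r2pi|r2pi] := leP r (2 * pi).
  apply: periodic_one_sided_lip; [exact: hker_periodic | | by rewrite r0].
  move=> y z y1 yz z2; rewrite !hker_hsing ?y1 ?z2 ?(le_trans y1 yz) ?(le_trans yz z2) //.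
  exact: hsing_one_sided_lip.
have := normr_hker_le1 (x + r); have := normr_hker_le1 x; have := @pi_ge2 R.
rewrite !ler_norml; lra.
Qed.

Lemma hker_one_sided_lip x y :
  - 8 * (x - y) ^+ 2 <= (x - y) * (hker alpha x - hker alpha y).
Proof.
wlog yx : x y / y <= x.
  move=> H; have [/H//|/ltW xy] := leP y x.
  by rewrite -[x - y]opprB sqrrN -[hker alpha x - _]opprB mulrNN H.
have := hker_incr_ge y (x - y); rewrite subr_ge0 [y + _]addrC subrK => /(_ yx).
have : 0 <= x - y by rewrite subr_ge0.
nra.
Qed.

End Kernel.

Section FiniteMeasureIntegral.
Context {d} {T : measurableType d} {R : realType}.
Variable m : {measure set T -> \bar R}.
Hypothesis m_fin : (m setT < +oo)%E.

Lemma integrable_le_bound (f : T -> R) (M : R) : measurable_fun setT f ->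
  (forall x, `|f x| <= M) -> m.-integrable setT (EFin \o f).
Proof.
move=> mf fM; apply: measurable_bounded_integrable => //.
rewrite /bounded_near; near=> N => x _ /=; apply: le_trans (fM x) _.
by near: N; exact: nbhs_pinfty_ge (num_real M).
Unshelve. all: end_near. Qed.

Lemma Rintegral_ge_mass (f : T -> R) (a : R) : m.-integrable setT (EFin \o f) ->
  (forall x, a <= f x) -> a * fine (m setT) <= Rintegral m setT f.
Proof.
move=> intf af; rewrite -Rintegral_cst //; apply: le_Rintegral => //.
by apply: integrable_le_bound => // x; exact: lexx.
Qed.

End FiniteMeasureIntegral.

Section Gronwall.
Context {R : realType}.

Lemma gronwall_derive (V dV : R -> R) (L T : R) :
  {within `[0, T], continuous V} ->
  (forall s, s \in `]0, T[ -> is_derive s 1 V (dV s)) ->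
  (forall s, s \in `]0, T[ -> dV s <= L * V s) ->
  forall t, t \in `[0, T] -> V t <= V 0 * expR (L * t).
Proof.
move=> cV dV_V dV_le t t_in.
(* V e^(-L t) is nonincreasing. *)
pose E := expR \o ((- L) \*: @id R).
have E_val (s : R) : E s = expR (- L * s) by [].
have dE (s : R) : is_derive s 1 E (expR (- L * s) * (- L *: 1)).
  by apply: is_derive1_comp; apply: is_deriveZ.
have dG s : s \in `]0, T[ -> is_derive s 1 (V * E) ((dV s - L * V s) * E s).
  move=> s_in; apply: is_derive_eq; first exact: is_deriveM (dV_V s s_in) (dE s).
  by rewrite /E /GRing.scale /= mulr1; ring.
have cG : {within `[0, T], continuous (V * E)}.
  move=> x; apply: cvgM; first exact: cV.
  apply: continuous_subspaceT => y; apply: continuous_comp; last exact: continuous_expR.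
  exact: scaler_continuous.
have G_le : (V * E) t <= (V * E) 0.
  have T0 : 0 <= T by move: t_in; rewrite in_itv /= => /andP[t0 tT]; exact: le_trans tT.
  apply: (ler0_derive1_le_cc (a := 0) (b := T)) => //.
  - by move=> s /dG; case.
  - move=> s s_in; rewrite derive1E; have [_ ->] := dG s s_in.
    by rewrite mulr_le0_ge0 ?expR_ge0 // subr_le0 dV_le.
  - by rewrite in_itv /= lexx.
  - by move: t_in; rewrite in_itv /= => /andP[].
have -> : V t = V t * E t * expR (L * t).
  by rewrite E_val -mulrA -expRD mulNr addNr expR0 mulr1.
apply: ler_wpM2r; [exact: expR_ge0 | apply: le_trans G_le _].
by change (V 0 * E 0 <= V 0); rewrite E_val mulr0 expR0 mulr1.
Qed.

End Gronwall.

Section Flow.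
Context {R : realType}.
Variables (alpha K : R).
Hypotheses (alpha_gt0 : 0 < alpha) (alpha_lt_half : alpha < 1 / 2) (K_gt0 : 0 < K).

Lemma measurable_hker_shift x :
  measurable_fun setT (fun p : R * R => hker alpha (x - p.1)).
Proof.
apply: measurableT_comp; first exact: measurable_hker.
by apply: measurable_funB => //; exact: measurable_fst.
Qed.

Lemma PfieldE m x w :
  Pfield alpha K m x w = w - K * Rintegral m setT (fun p : R * R => hker alpha (x - p.1)).
Proof. by []. Qed.

Lemma Rintegral_hker_one_sided_lip (m : {measure set (R * R)%type -> \bar R}) x1 x2 (k : int) :
  (m setT < +oo)%E ->
  - 8 * (x1 - x2 - (2 * pi) *~ k) ^+ 2 * fine (m setT) <=
  (x1 - x2 - (2 * pi) *~ k) *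
    (Rintegral m setT (fun p : R * R => hker alpha (x1 - p.1)) -
     Rintegral m setT (fun p : R * R => hker alpha (x2 - p.1))).
Proof.
move=> m_fin; set U := x1 - x2 - _.
pose h x (p : R * R) := hker alpha (x - p.1).
have int_h x : m.-integrable setT (EFin \o h x).
  apply: (integrable_le_bound m m_fin _ 1) => [|p]; first exact: measurable_hker_shift.
  exact: normr_hker_le1.
have int_h1 := int_h x1; have int_h2 := int_h x2.
have diff_le p : `|h x1 p - h x2 p| <= 1 + 1.
  by rewrite (le_trans (ler_normB _ _)) // lerD // normr_hker_le1.
have int_diff : m.-integrable setT (EFin \o (fun p => h x1 p - h x2 p)).
  apply: (integrable_le_bound m m_fin _ (1 + 1)) => //.
  by apply: measurable_funB; exact: measurable_hker_shift.
have int_Udiff : m.-integrable setT (EFin \o (fun p => U * (h x1 p - h x2 p))).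
  apply: (integrable_le_bound m m_fin _ (`|U| * (1 + 1))) => [|p].
    apply: measurable_funM => //; apply: measurable_funB; exact: measurable_hker_shift.
  by rewrite normrM ler_wpM2l.
rewrite -RintegralB // -RintegralZl //; apply: Rintegral_ge_mass => // p.
have e : x1 - p.1 - (2 * pi) *~ k - (x2 - p.1) = U by rewrite /U; ring.
have := hker_one_sided_lip _ alpha_gt0 alpha_lt_half (x1 - p.1 - (2 * pi) *~ k) (x2 - p.1).
by rewrite e hker_subz.
Qed.

Lemma Pfield_one_sided_lip (m : {measure set (R * R)%type -> \bar R}) (C : R)
    x1 x2 w1 w2 (k : int) : (m setT <= C%:E)%E ->
  2 * (x1 - x2 - (2 * pi) *~ k) * (Pfield alpha K m x1 w1 - Pfield alpha K m x2 w2) <=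
    (1 + 16 * K * C) * ((x1 - x2 - (2 * pi) *~ k) ^+ 2 + (w1 - w2) ^+ 2).
Proof.
move=> mC; have m_fin := le_lt_trans mC (ltry C).
have := Rintegral_hker_one_sided_lip m x1 x2 k m_fin.
rewrite !PfieldE; set U := x1 - x2 - _.
set I1 := Rintegral m setT _; set I2 := Rintegral m setT _ => kernel_term.
have mass_ge0 : 0 <= fine (m setT) by apply: fine_ge0; exact: measure_ge0.
have mass_le : fine (m setT) <= C by rewrite -lee_fin fineK // ge0_fin_numE.
have mass_term : - 8 * U ^+ 2 * C <= U * (I1 - I2).
  by apply: le_trans kernel_term; have := sqr_ge0 U; nra.
have cross : 2 * U * (w1 - w2) <= U ^+ 2 + (w1 - w2) ^+ 2.
  by have := sqr_ge0 (U - (w1 - w2)); rewrite sqrrB; lra.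
have := mulr_ge0 (mulr_ge0 (ltW K_gt0) (le_trans mass_ge0 mass_le)) (sqr_ge0 (w1 - w2)).
have := ler_wpM2l (ltW K_gt0) mass_term.
lra.
Qed.

End Flow.

Section Energy.
Context {R : realType} {alpha K T C : R} {mu : R -> {measure set (R * R)%type -> \bar R}}.
Hypotheses (alpha_gt0 : 0 < alpha) (alpha_lt_half : alpha < 1 / 2) (K_gt0 : 0 < K).
Hypothesis mass_le : forall t, t \in `[0, T] -> (mu t setT <= C%:E)%E.

Lemma char_sol_energy_le th1 om1 th2 om2 (k : int) :
  char_sol alpha K T mu th1 om1 -> char_sol alpha K T mu th2 om2 ->
  forall t, t \in `[0, T] ->
    (th1 t - th2 t - (2 * pi) *~ k) ^+ 2 + (om1 t - om2 t) ^+ 2 <=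
    ((th1 0 - th2 0 - (2 * pi) *~ k) ^+ 2 + (om1 0 - om2 0) ^+ 2) *
      expR ((1 + 16 * K * C) * t).
Proof.
move=> [c_th1 [c_om1 d1]] [c_th2 [c_om2 d2]].
pose U := th1 - th2 - cst ((2 * pi) *~ k); pose W := om1 - om2.
pose P s := Pfield alpha K (mu s) (th1 s) (om1 s) - Pfield alpha K (mu s) (th2 s) (om2 s).
apply: (@gronwall_derive _ (U * U + W * W) (fun s => 2 * U s * P s)).
- have cU : {within `[0, T], continuous U}.
    by move=> x; apply: cvgB; [apply: cvgB; [exact: c_th1 | exact: c_th2] | exact: cvg_cst].
  have cW : {within `[0, T], continuous W}.
    by move=> x; apply: cvgB; [exact: c_om1 | exact: c_om2].
  by move=> x; apply: cvgD; apply: cvgM; [exact: cU | exact: cU | exact: cW | exact: cW].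
- move=> s s_in; have [dth1 dom1] := d1 s s_in; have [dth2 dom2] := d2 s s_in.
  have dU : is_derive s 1 U (P s - 0) by apply: is_deriveB => //; apply: is_deriveB.
  have dW : is_derive s 1 W (0 - 0) by apply: is_deriveB.
  apply: (is_derive_eq (is_deriveD (is_deriveM dU dU) (is_deriveM dW dW))).
  by rewrite /GRing.scale /= !subr0 mulr0 !addr0 -mulr2n -mulrA mulr_natl.
- move=> s s_in; apply: Pfield_one_sided_lip => //.
  by apply: mass_le; move: s_in; rewrite !in_itv /= => /andP[/ltW -> /ltW ->].
Qed.

End Energy.

Theorem mainTheorem15 (R : realType) (alpha K T : R)
  (mu : R -> {measure set (R * R)%type -> \bar R}) :
  0 < alpha -> alpha < 1 / 2 -> 0 < K -> in_CM T mu ->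
  exists L : R,
    forall th1 om1 th2 om2 : R -> R,
      char_sol alpha K T mu th1 om1 -> char_sol alpha K T mu th2 om2 ->
      forall t, t \in `[0, T] ->
        distTR (th1 t, om1 t) (th2 t, om2 t)
          <= distTR (th1 0, om1 0) (th2 0, om2 0) * expR (L * t).
Proof.
move=> alpha_gt0 alpha_lt_half K_gt0 [_ [[C mass_le] _]].
exists ((1 + 16 * K * C) / 2) => th1 om1 th2 om2 sol1 sol2 t t_in.
have [k ->] := distTR_lift (th1 0, om1 0) (th2 0, om2 0).
apply: le_trans (distTR_le_lift _ _ k) _ => /=.
have -> : expR ((1 + 16 * K * C) / 2 * t) = Num.sqrt (expR ((1 + 16 * K * C) * t)).
  rewrite -[LHS]ger0_norm ?expR_ge0 // -sqrtr_sqr expr2 -expRD.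
  by congr (Num.sqrt (expR _)); field.
rewrite -sqrtrM ?addr_ge0 ?sqr_ge0 //; apply: ler_wsqrtr.
exact: char_sol_energy_le alpha_gt0 alpha_lt_half K_gt0 mass_le _ _ _ _ k sol1 sol2 t t_in.
Qed.
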